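(* Fix $0<\rho<1$. For $t\in(0,1]$ write $c=\sqrt{t}$ and define $$\begin{aligned}T(t)={}&\frac{2(1+\rho^2-\frac{2}{3}\rho^2 c^2)^{\frac{3}{2}}}{3\rho^2c^2}+\frac{7}{6}-\frac{\rho^2}{10}+\frac{2\rho^2c^2}{15} +\Big(\frac{1}{6}-\frac{7(1+\rho^2)}{30\rho^2c^2}\Big)\Big(\sqrt{1+\rho^2-2\rho c}+\sqrt{1+\rho^2+2\rho c}\Big)\\&+\Big(\frac{\rho c}{12}-\frac{10\rho^2+1}{60\rho c}+\frac{(1+\rho^2)^2}{10\rho^3c^3}\Big)\Big(\sqrt{1+\rho^2-2\rho c}-\sqrt{1+\rho^2+2\rho c}\Big).\end{aligned}$$ Then the left derivative of $T$ at $t=1$ exists and satisfies $T'_{-}(1)\ge 0$. *)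

From Stdlib Require Import Reals.
From Coquelicot Require Import Coquelicot.
Open Scope R_scope.

Definition Tfun (rho t : R) : R :=
  let c := sqrt t in
  2 * Rpower (1 + rho^2 - 2/3 * rho^2 * c^2) (3/2) / (3 * rho^2 * c^2)
  + 7/6 - rho^2 / 10 + 2 * rho^2 * c^2 / 15
  + (1/6 - 7 * (1 + rho^2) / (30 * rho^2 * c^2))
    * (sqrt (1 + rho^2 - 2 * rho * c) + sqrt (1 + rho^2 + 2 * rho * c))
  + (rho * c / 12 - (10 * rho^2 + 1) / (60 * rho * c)
     + (1 + rho^2)^2 / (10 * rho^3 * c^3))
    * (sqrt (1 + rho^2 - 2 * rho * c) - sqrt (1 + rho^2 + 2 * rho * c)).

Definition is_left_derive (f : R -> R) (x l : R) : Prop :=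
  filterlim (fun t => (f t - f x) / (t - x)) (at_left x) (locally l).

(* For rho < 1 every square root in T has a positive argument at t = 1, so T is
   differentiable there (two-sidedly), using sqrt ((1 -+ rho)^2) = 1 -+ rho and
   x^(3/2) = x sqrt x.  With x = rho^2 the derivative is
   (11 x^2 + 60 x + 40 - 40/3 (4 x + 3) sqrt (1 + x/3)) / (60 x), and its numerator
   is nonnegative: after squaring, the difference of the two sides is
   x^2 (121 x^2 + 10040/27 x + 640/3) >= 0. *)
From Stdlib Require Import Reals Lra.
From Coquelicot Require Import Coquelicot.
Open Scope R_scope.

Lemma is_derive_left (f : R -> R) (x l : R) :
  is_derive f x l -> is_left_derive f x l.
Proof.
intros Hd. apply is_derive_Reals in Hd.
apply filterlim_locally. intros eps.
destruct (Hd eps (cond_pos eps)) as [d Hclose].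
exists d. intros t Hdist Hlt. simpl in *.
assert (Hh : t - x <> 0) by lra.
specialize (Hclose (t - x) Hh Hdist).
now replace (x + (t - x)) with t in Hclose by ring.
Qed.

Lemma Rpower_3_2 (x : R) : 0 < x -> Rpower x (3/2) = x * sqrt x.
Proof.
intros Hx.
replace (3/2) with (1 + /2) by field.
now rewrite Rpower_plus, Rpower_1, Rpower_sqrt.
Qed.

Definition Tfun_slope_at_1 (rho : R) : R :=
  (11 * rho^4 + 60 * rho^2 + 40 - 40/3 * (4 * rho^2 + 3) * sqrt (1 + rho^2 / 3))
  / (60 * rho^2).

Lemma is_derive_Tfun_1 (rho : R) :
  0 < rho -> rho < 1 -> is_derive (Tfun rho) 1 (Tfun_slope_at_1 rho).
Proof.
intros Hrho0 Hrho1.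
unfold Tfun, Tfun_slope_at_1, Rpower. cbv zeta.
auto_derive; rewrite sqrt_1.
-
  assert (rho * rho > 0) by nra.
  repeat split; try lra; try nra; apply Rgt_not_eq; ring_simplify; nra.
- replace (1 + rho * (rho * 1) + - (2 * rho * 1)) with ((1 - rho)^2) by ring.
  replace (1 + rho * (rho * 1) + 2 * rho * 1) with ((1 + rho)^2) by ring.
  rewrite !sqrt_pow2 by lra.
  replace (1 + rho * (rho * 1) + - (2 / 3 * (rho * (rho * 1)) * (1 * (1 * 1))))
    with (1 + rho^2 / 3) by field.
  change (exp (3/2 * ln (1 + rho^2 / 3))) with (Rpower (1 + rho^2 / 3) (3/2)).
  rewrite Rpower_3_2 by nra.
  field. repeat split; nra.
Qed.

Lemma sqrt_slope_bound (x : R) :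
  0 <= x -> 40/3 * (4 * x + 3) * sqrt (1 + x / 3) <= 11 * x^2 + 60 * x + 40.
Proof.
intros Hx.
assert (Hq2 : sqrt (1 + x / 3) * sqrt (1 + x / 3) = 1 + x / 3)
  by (apply sqrt_sqrt; lra).
pose proof (sqrt_pos (1 + x / 3)) as Hq0.
set (q := sqrt (1 + x / 3)) in *.
set (a := 11 * x^2 + 60 * x + 40).
set (b := 40/3 * (4 * x + 3) * q).
assert (Hsq : b * b <= a * a).
{ unfold a, b.
  replace (40/3 * (4 * x + 3) * q * (40/3 * (4 * x + 3) * q))
    with (1600/9 * (4 * x + 3)^2 * (q * q)) by field.
  rewrite Hq2. nra. }
assert (0 <= b) by (unfold b; nra).
assert (0 < a) by (unfold a; nra).
nra.
Qed.

Lemma Tfun_slope_at_1_ge0 (rho : R) : rho <> 0 -> 0 <= Tfun_slope_at_1 rho.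
Proof.
intros Hrho.
assert (Hx : 0 < rho^2) by (rewrite <- Rsqr_pow2; apply Rsqr_pos_lt, Hrho).
unfold Tfun_slope_at_1.
apply Rle_mult_inv_pos; [| lra].
replace (rho^4) with ((rho^2)^2) by ring.
pose proof (sqrt_slope_bound (rho^2) (Rlt_le _ _ Hx)). lra.
Qed.

Theorem lemma7 (rho : R) (hrho0 : 0 < rho) (hrho1 : rho < 1) :
  exists l : R, is_left_derive (Tfun rho) 1 l /\ 0 <= l.
Proof.
exists (Tfun_slope_at_1 rho). split.
- apply is_derive_left, is_derive_Tfun_1; assumption.
- apply Tfun_slope_at_1_ge0; lra.
Qed.
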